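(* Let $\boldsymbol\alpha$ be a fixed static allocation in the setting described in the context. Then $$\min_{j\ne i^*}\mathrm{LDR}_{j,i^*}\;\ge\;\underline{\mathrm{LDR}}:=\min_{(i,\theta_b)\in\Xi}W_i(\theta_b)G_i(\theta_b),$$ where $\mathrm{LDR}_{j,i^*}:=\min_{\mathbf M\in\mathcal A_j}\sum_{(i,\theta_b)\in I(\mathbf M)}G_i(\theta_b)$.
   Context: There are $k\ge2$ solutions and $B$ parameter values $\theta_1,\dots,\theta_B$ with probabilities $p_1,\dots,p_B>0$, $\sum_bp_b=1$. For each $i,b$, $y_i(\theta_b)$ is the mean simulation output of solution $i$ at $\theta_b$, with simulation variance $\lambda_i^2(\theta_b)>0$. Each $i^b=\arg\min_iy_i(\theta_b)$ is assumed unique, and $i^*=\arg\max_i\sum_bp_b\mathbf 1\{i=i^b\}$ is assumed unique. Favorable sets: $\Theta_i=\{\theta_b:i^b=i\}$. A static allocation is $\boldsymbol\alpha$ with $\alpha_i(\theta_b)\ge0$, $\sum_{i,b}\alpha_i(\theta_b)=1$. For $i\ne i^b$, $$G_i(\theta_b)=\frac{(y_i(\theta_b)-y_{i^b}(\theta_b))^2}{2\left(\lambda_i^2(\theta_b)/\alpha_i(\theta_b)+\lambda_{i^b}^2(\theta_b)/\alpha_{i^b}(\theta_b)\right)},$$ with $G_i(\theta_b)=0$ if $\alpha_i(\theta_b)=0$ or $\alpha_{i^b}(\theta_b)=0$. Let $\mathcal M=\{\mathbf M\in\{0,1\}^{k\times B}:\mathbf M^\top\mathbf 1_k=\mathbf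 1_B\}$ with entries $m_{i,b}$; $d_j(\mathbf M)=\sum_bp_bm_{i^*,b}-\sum_bp_bm_{j,b}$; $I(\mathbf M)=\{(i,\theta_b):m_{i,b}=1,i\ne i^b\}$; for $j\ne i^*$, $\mathcal A_j=\{\mathbf M\in\mathcal M:d_j(\mathbf M)\le0\}$. Let $d_j=\sum_bp_b\mathbf 1\{i^*=i^b\}-\sum_bp_b\mathbf 1\{j=i^b\}$. Let $\Xi=\{(i,\theta_b):i\ne i^*,i\ne i^b\}$. Balance weights: $W_i(\theta_b)=\infty$ for $(i,\theta_b)\notin\Xi$, and for $(i,\theta_b)\in\Xi$, $$W_i(\theta_b)=\begin{cases}\max\left\{\min\left(\min_{j\ne i^*}d_j,\ d_i/2\right)/p_b,\ 1\right\},&\theta_b\in\Theta_{i^*},\\ \max\{d_i/p_b,1\},&\theta_b\notin\Theta_{i^*}.\end{cases}$$ *)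

From HB Require Import structures.
From mathcomp Require Import all_boot all_order all_algebra.
From mathcomp Require Import constructive_ereal.
Set Implicit Arguments. Unset Strict Implicit. Unset Printing Implicit Defensive.
Import Order.TTheory GRing.Theory Num.Theory.
Local Open Scope ring_scope.

Section Defs.
Variables (R : realFieldType) (k B : nat).

Definition Gfun (y lam alpha : 'I_k -> 'I_B -> R) (ibest : 'I_B -> 'I_k)
    (i : 'I_k) (b : 'I_B) : R :=
  if (alpha i b == 0) || (alpha (ibest b) b == 0) then 0 else
  (y i b - y (ibest b) b) ^+ 2 /
    (2 * (lam i b ^+ 2 / alpha i b + lam (ibest b) b ^+ 2 / alpha (ibest b) b)).

Definition inMset (M : 'M[bool]_(k, B)) : bool :=
  [forall b : 'I_B, (\sum_(i < k) (M i b : nat))%N == 1%N].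

Definition dM (p : 'I_B -> R) (istar j : 'I_k) (M : 'M[bool]_(k, B)) : R :=
  \sum_(b < B) p b * (M istar b)%:R - \sum_(b < B) p b * (M j b)%:R.

Definition inIM (ibest : 'I_B -> 'I_k) (M : 'M[bool]_(k, B)) (ib : 'I_k * 'I_B)
  : bool := M ib.1 ib.2 && (ib.1 != ibest ib.2).

Definition inA (p : 'I_B -> R) (istar j : 'I_k) (M : 'M[bool]_(k, B)) : bool :=
  inMset M && (dM p istar j M <= 0).

Definition LDR (p : 'I_B -> R) (y lam alpha : 'I_k -> 'I_B -> R)
    (ibest : 'I_B -> 'I_k) (istar j : 'I_k) : \bar R :=
  \big[Order.min/+oo%E]_(M : 'M[bool]_(k, B) | inA p istar j M)
     (\sum_(ib : 'I_k * 'I_B | inIM ibest M ib) Gfun y lam alpha ibest ib.1 ib.2)%:E.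

Definition dtrue (p : 'I_B -> R) (ibest : 'I_B -> 'I_k) (istar j : 'I_k) : R :=
  \sum_(b < B) p b * (istar == ibest b)%:R - \sum_(b < B) p b * (j == ibest b)%:R.

Definition inXi (ibest : 'I_B -> 'I_k) (istar : 'I_k) (ib : 'I_k * 'I_B) : bool :=
  (ib.1 != istar) && (ib.1 != ibest ib.2).

Definition Wfun (p : 'I_B -> R) (ibest : 'I_B -> 'I_k) (istar : 'I_k)
    (i : 'I_k) (b : 'I_B) : \bar R :=
  if ~~ inXi ibest istar (i, b) then +oo%E else
  if ibest b == istar then
    Order.max
      ((Order.min (\big[Order.min/+oo%E]_(j < k | j != istar) (dtrue p ibest istar j)%:E)
                  (dtrue p ibest istar i / 2)%:E) * ((p b)^-1)%:E)%E
      1%E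
  else Order.max ((dtrue p ibest istar i / p b)%:E) 1%E.

Definition LDRlow (p : 'I_B -> R) (y lam alpha : 'I_k -> 'I_B -> R)
    (ibest : 'I_B -> 'I_k) (istar : 'I_k) : \bar R :=
  \big[Order.min/+oo%E]_(ib : 'I_k * 'I_B | inXi ibest istar ib)
     (Wfun p ibest istar ib.1 ib.2 * (Gfun y lam alpha ibest ib.1 ib.2)%:E)%E.

End Defs.

(* Fix j <> i* and M in A_j, and let w be the balance weight on Xi before its
   truncation, so that W = max (w, 1).  Each column of M holds a single 1, and a
   case analysis on its row gives, for every b,
     p_b * (column b of d_j - d_j(M)) <= d_j * sum_{i | (i, theta_b) in Xi /\ I(M)} 1/w_i(theta_b).
   Summing over b and using d_j - d_j(M) >= d_j > 0 yields sum_{Xi /\ I(M)} 1/w >= 1,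
   hence sum_{Xi /\ I(M)} 1/W >= 1.  If W_c G_c > S := sum_{Xi /\ I(M)} G held for
   every c in Xi /\ I(M), summing G_c > S / W_c would give S > S; so some c in Xi
   has W_c G_c <= S, and S is at most the cost of M. *)

From HB Require Import structures.
From mathcomp Require Import all_boot all_order all_algebra.
From mathcomp Require Import constructive_ereal.
From mathcomp Require Import lra.
Set Implicit Arguments. Unset Strict Implicit. Unset Printing Implicit Defensive.
Import Order.TTheory GRing.Theory Num.Theory.
Local Open Scope ring_scope.

Section WeightedPigeonhole.
Variables (R : realFieldType) (T : finType) (P : pred T).

Lemma exists_weighted_le_sum (w g : T -> R) :
  (forall c, P c -> 0 < w c) -> (forall c, P c -> 0 <= g c) ->
  1 <= \sum_(c | P c) (w c)^-1 ->
  exists2 c, P c & w c * g c <= \sum_(c | P c) g c.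
Proof.
move=> w_gt0 g_ge0 inv_ge1; set S := \sum_(c | P c) g c.
case: (boolP [exists c, P c && (w c * g c <= S)]) => [/existsP[c /andP[]]|].
  by exists c.
move=> /existsPn S_lt; exfalso.
have [c0 Pc0] : exists c, P c.
  case: (pickP P) => [c Pc|P0]; first by exists c.
  by move: inv_ge1; rewrite big_pred0 // ler10.
have S_ge0 : 0 <= S by exact: sumr_ge0.
have : S * \sum_(c | P c) (w c)^-1 < S.
  rewrite mulr_sumr; apply: ltr_sum => [|c Pc].
    by apply/hasP; exists c0; rewrite ?mem_index_enum.
  have := S_lt c; rewrite Pc /= -ltNge => Sc.
  by rewrite ltr_pdivrMr ?w_gt0 // mulrC.
by rewrite ltNge ler_peMr.
Qed.

Lemma sum_inv_max1_ge1 (x : T -> R) :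
  1 <= \sum_(c | P c) (x c)^-1 -> 1 <= \sum_(c | P c) (Num.max (x c) 1)^-1.
Proof.
move=> inv_ge1.
have max_inv_ge0 c : 0 <= (Num.max (x c) 1)^-1.
  by rewrite invr_ge0 le_max ler01 orbT.
case: (boolP [exists c, P c && (x c <= 1)]) => [/existsP[c /andP[Pc xc]]|].
  rewrite (bigD1 c) //= (max_r xc) invr1 lerDl.
  exact: sumr_ge0.
move=> /existsPn x_gt1; rewrite (eq_bigr (fun c => (x c)^-1)) // => c Pc.
by have := x_gt1 c; rewrite Pc /= -ltNge => /ltW/max_l ->.
Qed.

End WeightedPigeonhole.

Lemma bigmin_EFin_attained (R : realDomainType) (I : finType) (P : pred I)
    (F : I -> R) (i0 : I) :
  P i0 -> exists2 i, P i & (\big[Order.min/+oo]_(i | P i) (F i)%:E = (F i)%:E)%E.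
Proof.
move=> Pi0; rewrite (bigmin_eq_arg _ i0) // => [|i _]; last exact: leey.
by case: arg_minP => // i Pi _; exists i.
Qed.

Lemma inMset_onehot (k B : nat) (M : 'M[bool]_(k, B)) :
  inMset M -> forall b, exists a, forall i, M i b = (i == a).
Proof.
move=> /forallP colM b; have /sum_nat_eq1[a [_ Mab M0]] := colM b.
exists a => i; case: eqVneq => [->|ia]; first by case: (M a b) Mab.
by have := M0 i ia isT; case: (M i b).
Qed.

Lemma Gfun_ge0 (R : realFieldType) (k B : nat) (y lam alpha : 'I_k -> 'I_B -> R)
    (ibest : 'I_B -> 'I_k) :
  (forall i b, 0 <= alpha i b) -> forall i b, 0 <= Gfun y lam alpha ibest i b.
Proof.
move=> alpha_ge0 i b; rewrite /Gfun; case: ifP => // _.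
by rewrite divr_ge0 ?sqr_ge0 // mulr_ge0 // addr_ge0 // divr_ge0 ?sqr_ge0.
Qed.

Lemma sum_column_onehot (R : nmodType) (k B : nat) (ibest : 'I_B -> 'I_k)
    (istar : 'I_k) (M : 'M[bool]_(k, B)) (a : 'I_k) (b : 'I_B) (F : 'I_k -> R) :
  (forall i, M i b = (i == a)) ->
  \sum_(i | inIM ibest M (i, b) && inXi ibest istar (i, b)) F i
    = if inXi ibest istar (a, b) then F a else 0.
Proof.
move=> colM; rewrite (eq_bigl (fun i => (i == a) && inXi ibest istar (a, b))) => [|i].
  case: ifP => _; last by rewrite big_pred0 // => i; rewrite andbF.
  by rewrite (eq_bigl (pred1 a)) ?big_pred1_eq // => i; rewrite andbT.
rewrite /inIM /inXi /= colM; case: eqVneq => //= ->.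
by case: (a != istar); case: (a != ibest b).
Qed.

Section BalanceWeights.
Variables (R : realFieldType) (k B : nat) (p : 'I_B -> R) (ibest : 'I_B -> 'I_k)
  (istar : 'I_k).
Hypothesis p_gt0 : forall b, 0 < p b.
Hypothesis istar_mode : forall i, i != istar ->
  \sum_(b < B) p b * (i == ibest b)%:R < \sum_(b < B) p b * (istar == ibest b)%:R.

Local Notation d := (dtrue p ibest istar).

Lemma dtrue_gt0 j : j != istar -> 0 < d j.
Proof. by move=> jn; rewrite subr_gt0 istar_mode. Qed.

Definition dmin : R := fine (\big[Order.min/+oo]_(i < k | i != istar) (d i)%:E)%E.

Lemma dminE j : j != istar ->
  (\big[Order.min/+oo]_(i < k | i != istar) (d i)%:E)%E = dmin%:E.
Proof.
move=> jn; have [i _ e] := bigmin_EFin_attained (P := fun i => i != istar) d jn.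
by rewrite /dmin e.
Qed.

Lemma dmin_gt0 j : j != istar -> 0 < dmin.
Proof.
move=> jn; have [i i_n e] := bigmin_EFin_attained (P := fun i => i != istar) d jn.
by rewrite /dmin e dtrue_gt0.
Qed.

Lemma dmin_le j : j != istar -> dmin <= d j.
Proof. by move=> jn; rewrite -lee_fin -(dminE jn); exact: bigmin_le_cond. Qed.

Definition Wraw (i : 'I_k) (b : 'I_B) : R :=
  if ibest b == istar then Num.min dmin (d i / 2) / p b else d i / p b.

Lemma Wfun_inXi i b : inXi ibest istar (i, b) ->
  Wfun p ibest istar i b = (Num.max (Wraw i b) 1)%:E.
Proof.
move=> Xib; have /andP[i_n _] := Xib.
rewrite /Wfun Xib /= (dminE i_n) /Wraw.
by case: ifP => _; rewrite ?EFin_max -?EFin_min -?EFinM.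
Qed.

(* When column b of M is the indicator of row a, the left side is p_b times
   column b of d_j - d_j(M). *)
Lemma column_gap_le j a b : j != istar ->
  p b * ((istar == ibest b)%:R - (j == ibest b)%:R - (istar == a)%:R + (j == a)%:R)
    <= d j * (if inXi ibest istar (a, b) then (Wraw a b)^-1 else 0).
Proof.
move=> jn; have dj := dtrue_gt0 jn; have pb := p_gt0 b.
rewrite /inXi /=; case: (eqVneq a (ibest b)) => [<-|ab].
  rewrite andbF mulr0; lra.
rewrite andbT; case: (eqVneq a istar) ab => [-> ab|a_n ab] /=.
  rewrite (negbTE jn) (negbTE ab) mulr0 mulr0n.
  have := ler0n R (j == ibest b); nra.
have da := dtrue_gt0 a_n; rewrite /Wraw.
case: (eqVneq (ibest b) istar) => [ib|ib].
  have m_gt0 : 0 < Num.min dmin (d a / 2) by rewrite lt_min (dmin_gt0 a_n) divr_gt0.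
  rewrite ib (negbTE jn) invf_div mulrA ler_pdivlMr //.
  case: (eqVneq j a) => [->|ja]; rewrite ?mulr1n ?mulr0n.
    have : Num.min dmin (d a / 2) <= d a / 2 by rewrite ge_min lexx orbT.
    nra.
  have : Num.min dmin (d a / 2) <= d j by rewrite ge_min dmin_le.
  nra.
case: (eqVneq j a) => [->|ja]; rewrite ?mulr1n ?mulr0n.
  rewrite (negbTE ab) invf_div mulrCA mulfV ?gt_eqF // mulr0n; lra.
have : 0 <= d j / (d a / p b) by rewrite divr_ge0 // ltW // divr_gt0.
have := ler0n R (j == ibest b); nra.
Qed.

Lemma sum_inv_Wraw_ge1 j (M : 'M[bool]_(k, B)) : j != istar -> inA p istar j M ->
  1 <= \sum_(c | inIM ibest M c && inXi ibest istar c) (Wraw c.1 c.2)^-1.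
Proof.
move=> jn /andP[/inMset_onehot colM dM_le0]; have dj := dtrue_gt0 jn.
set P' := fun c => inIM ibest M c && inXi ibest istar c.
have -> : \sum_(c | P' c) (Wraw c.1 c.2)^-1
    = \sum_b \sum_(i | P' (i, b)) (Wraw i b)^-1.
  by rewrite (exchange_big_dep predT) //= pair_big_dep; apply: eq_bigl => -[].
rewrite -(ler_pM2l dj) mulr1 mulr_sumr.
apply: (@le_trans _ _ (d j - dM p istar j M)); first by rewrite lerDl oppr_ge0.
have -> : d j - dM p istar j M = \sum_b p b *
    ((istar == ibest b)%:R - (j == ibest b)%:R - (M istar b)%:R + (M j b)%:R).
  rewrite /dM /dtrue; apply/esym; under eq_bigr do rewrite mulrDr !mulrBr.
  rewrite !(big_split, sumrN) /=; lra.
apply: ler_sum => b _; have [a colMb] := colM b.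
by rewrite !colMb (sum_column_onehot _ _ _ colMb) column_gap_le.
Qed.

End BalanceWeights.

Theorem theorem2 (R : realFieldType) (k B : nat) (hk : (2 <= k)%N)
  (p : 'I_B -> R) (hp : forall b, 0 < p b) (hp1 : \sum_(b < B) p b = 1)
  (y lam : 'I_k -> 'I_B -> R) (hlam : forall i b, 0 < lam i b ^+ 2)
  (ibest : 'I_B -> 'I_k)
  (hibest : forall b i, i != ibest b -> y (ibest b) b < y i b)
  (istar : 'I_k)
  (histar : forall i, i != istar ->
     \sum_(b < B) p b * (i == ibest b)%:R < \sum_(b < B) p b * (istar == ibest b)%:R)
  (alpha : 'I_k -> 'I_B -> R) (halpha0 : forall i b, 0 <= alpha i b)
  (halpha1 : \sum_(i < k) \sum_(b < B) alpha i b = 1) :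
  (LDRlow p y lam alpha ibest istar
     <= \big[Order.min/+oo%E]_(j < k | j != istar) LDR p y lam alpha ibest istar j)%E.
Proof.
apply: le_bigmin => [|j jn]; first exact: leey.
apply: le_bigmin => [|M MA]; first exact: leey.
have G_ge0 := Gfun_ge0 y lam ibest halpha0.
have W_gt0 c : 0 < Num.max (Wraw p ibest istar c.1 c.2) 1.
  by rewrite lt_max ltr01 orbT.
have [c /andP[cM cXi] cWG] := exists_weighted_le_sum
  (w := fun c => Num.max (Wraw p ibest istar c.1 c.2) 1)
  (g := fun c => Gfun y lam alpha ibest c.1 c.2)
  (fun c _ => W_gt0 c) (fun c _ => G_ge0 c.1 c.2)
  (sum_inv_max1_ge1 (sum_inv_Wraw_ge1 hp histar jn MA)).
apply: (bigmin_inf c) => //; rewrite Wfun_inXi // -EFinM lee_fin (le_trans cWG) //.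
rewrite [leRHS](bigID (inXi ibest istar)) /= lerDl.
by apply: sumr_ge0 => *; exact: G_ge0.
Qed.
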